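(* Let $D$ be a finite directed graph that is essentially a tree. Then $\Delta(D)$ is vertex decomposable, and hence shellable (in the nonpure sense).
   Context: For a finite directed graph $D$ (no loops, no multiple edges), the complex of directed trees $\Delta(D)$ has the directed edges of $D$ as vertices, and its faces are the edge sets of directed forests in $D$ (vertex-disjoint unions of rooted directed trees; equivalently, edge sets in which every vertex has in-degree at most $1$ and there is no directed cycle). $D$ is essentially a tree if the undirected graph obtained by replacing every directed edge, or pair of oppositely directed edges between the same two vertices, by a single undirected edge is a tree. A simplicial complex $\Delta$ is vertex decomposable if it is a simplex, or there is a vertex $v$ (a shedding vertex) such that $\Delta\setminus v$ (faces not containing $v$) and $\mathrm{link}_\Delta v$ are vertex decomposable and no facet of $\mathrm{link}_\Delta v$ is a facet of $\Delta\setminus v$. A (possibly nonpure) complex is shellable if its facets admit a linear order $F_1,\ldots,F_k$ such that for all $i<j$ there exist $l<j$ and a vertex $v\in F_j$ with $F_i\cap F_j\subseteq F_l\cap F_j=F_j\setminus\{v\}$. *)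

From mathcomp Require Import all_boot.
Set Implicit Arguments. Unset Strict Implicit. Unset Printing Implicit Defensive.

Definition deletion (T : finType) (K : {set {set T}}) (v : T) : {set {set T}} :=
  [set F in K | v \notin F].

Definition link (T : finType) (K : {set {set T}}) (v : T) : {set {set T}} :=
  [set F in K | (v \notin F) && ((v |: F) \in K)].

Definition facets (T : finType) (K : {set {set T}}) : {set {set T}} :=
  [set F in K | [forall G in K, (F \subset G) ==> (G == F)]].

Definition is_vertex (T : finType) (K : {set {set T}}) (v : T) : bool :=
  [exists F in K, v \in F].

Definition is_simplex (T : finType) (K : {set {set T}}) : Prop :=
  exists S : {set T}, K = powerset S.

Inductive vertex_decomposable (T : finType) : {set {set T}} -> Prop :=
  | vd_simplex K : is_simplex K -> vertex_decomposable K
  | vd_shed K v : is_vertex K v ->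
      vertex_decomposable (deletion K v) ->
      vertex_decomposable (link K v) ->
      (forall F, F \in facets (link K v) -> F \notin facets (deletion K v)) ->
      vertex_decomposable K.

Definition shellable (T : finType) (K : {set {set T}}) : Prop :=
  exists s : seq {set T},
    perm_eq s (enum (facets K)) /\
    forall i j, i < j < size s ->
      exists l, exists v,
        [/\ l < j, v \in nth set0 s j,
            (nth set0 s i :&: nth set0 s j) \subset (nth set0 s l :&: nth set0 s j)
          & nth set0 s l :&: nth set0 s j = nth set0 s j :\ v].

(* A finite directed graph on vertex type V: a relation D with D u v meaning
   there is a directed edge u -> v; no loops means D irreflexive; a relation
   has no multiple edges. *)

Definition edge_set (V : finType) (D : rel V) : {set V * V} :=
  [set e | D e.1 e.2].

(* Since the vertices are distinct, k <= #|V|, so we can quantify over tuples. *)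
Definition has_directed_cycle (V : finType) (F : {set V * V}) : bool :=
  [exists n : 'I_#|V|.+1, exists t : n.-tuple V,
     [&& 0 < n, uniq t & cycle (fun a b => (a, b) \in F) t]].

Definition directed_forest (V : finType) (F : {set V * V}) : bool :=
  [forall v : V, #|[set u : V | (u, v) \in F]| <= 1] && ~~ has_directed_cycle F.

Definition complex_of_directed_trees (V : finType) (D : rel V) : {set {set V * V}} :=
  [set F : {set V * V} | (F \subset edge_set D) && directed_forest F].

Definition underlying (V : finType) (D : rel V) : rel V :=
  fun u v => (u != v) && (D u v || D v u).

Definition is_tree (V : finType) (G : rel V) : Prop :=
  [/\ 0 < #|V|,
      (forall x y : V, connect G x y)
    & ~ (exists c : seq V, [&& 3 <= size c, uniq c & cycle G c])].

Definition essentially_tree (V : finType) (D : rel V) : Prop :=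
  is_tree (underlying D).

(* In a graph that is essentially a tree, a set of edges is a directed forest
   iff every vertex has in-degree at most one and no two edges are opposite:
   a longer directed cycle would be a cycle of the underlying tree.  For a set A
   of edges, the complex of such "weak forests" inside A is a simplex if A itself
   is one.  Otherwise A contains a fork u -> v <- w without the edge v -> w, or an
   opposite pair u <-> v in which v is the only in-neighbour of u: if neither
   existed, the opposite pairs would form a nonempty graph without leaves, hence
   with a cycle.  The edge u -> v is then a shedding vertex, because w -> v
   (respectively v -> u) can be added to every face of its link, and deletion and
   link are complexes of the same kind on fewer edges.  Shellability follows from
   vertex decomposability by listing a shelling of the deletion and then the cone
   over a shelling of the link. *)

From mathcomp Require Import all_boot.
From Stdlib Require Import Classical.
Set Implicit Arguments. Unset Strict Implicit. Unset Printing Implicit Defensive.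

Section Complexes.
Variable T : finType.
Implicit Types (K : {set {set T}}) (F G : {set T}) (v w : T).

Definition down_closed K := forall F G, F \in K -> G \subset F -> G \in K.

Definition sheds K v :=
  forall F, F \in facets (link K v) -> F \notin facets (deletion K v).

Lemma facetsP K F :
  reflect (F \in K /\ forall G, G \in K -> F \subset G -> G = F) (F \in facets K).
Proof.
rewrite inE; apply: (iffP andP) => [[FK /forall_inP maxF]|[FK maxF]].
  by split=> // G GK FG; apply/eqP; apply: (implyP (maxF G GK)).
by split=> //; apply/forall_inP => G GK; apply/implyP => FG; apply/eqP; apply: maxF.
Qed.

Lemma facet_above K F : F \in K -> exists2 G, G \in facets K & F \subset G.
Proof.
move=> FK; have FFK : (F \in K) && (F \subset F) by rewrite FK subxx.
case: (@arg_maxnP _ F (fun G => (G \in K) && (F \subset G)) (fun G => #|G|) FFK)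
  => G /andP[GK FG] maxG.
exists G => //; apply/facetsP; split=> // H HK GH.
apply/eqP; rewrite eq_sym eqEcard GH /=.
by apply: maxG; rewrite HK (subset_trans FG GH).
Qed.

Lemma deletion_down_closed K v : down_closed K -> down_closed (deletion K v).
Proof.
move=> Kdc F G; rewrite !inE => /andP[FK vF] GF.
by rewrite (Kdc F) //; apply: contra vF; apply: (subsetP GF).
Qed.

Lemma link_down_closed K v : down_closed K -> down_closed (link K v).
Proof.
move=> Kdc F G; rewrite !inE => /andP[FK /andP[vF vFK]] GF.
rewrite (Kdc F G) // (Kdc (v |: F)) ?setUS // andbT.
by apply: contra vF; apply: (subsetP GF).
Qed.

Lemma setD1_link K v F : down_closed K -> v \in F -> F \in K -> F :\ v \in link K v.
Proof.
move=> Kdc vF FK; rewrite !inE eqxx setD1K // FK.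
by rewrite (Kdc F) ?subD1set.
Qed.

Lemma facet_deletion_or_link K v F : down_closed K -> F \in facets K ->
  F \in facets (deletion K v) \/ v \in F /\ F :\ v \in facets (link K v).
Proof.
move=> Kdc /facetsP[FK maxF]; have [vF|vF] := boolP (v \in F).
  right; split=> //; apply/facetsP; split; first exact: setD1_link.
  move=> G; rewrite inE => /andP[_ /andP[vG vGK]] FG.
  have GF : F \subset v |: G by rewrite -(setD1K vF) setUS.
  by rewrite -(maxF _ vGK GF) setU1K.
left; apply/facetsP; split; first by rewrite inE FK vF.
by move=> G; rewrite inE => /andP[GK _]; apply: maxF.
Qed.

Lemma facet_link_cone K v G : down_closed K ->
  G \in facets (link K v) -> v |: G \in facets K.
Proof.
move=> Kdc /facetsP[]; rewrite inE => /andP[_ /andP[vG vGK]] maxG.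
apply/facetsP; split=> // H HK vGH.
have vH : v \in H by apply: (subsetP vGH); rewrite setU11.
suff <- : H :\ v = G by rewrite setD1K.
apply: maxG; first exact: (setD1_link Kdc vH HK).
by rewrite subsetD1 vG andbT (subset_trans (subsetUr _ _) vGH).
Qed.

Lemma facet_deletion_shedding K v F : down_closed K -> sheds K v ->
  F \in facets (deletion K v) -> F \in facets K.
Proof.
move=> Kdc shed Ffac; have /facetsP[] := Ffac; rewrite inE => /andP[FK vF] maxF.
apply/facetsP; split=> // H HK FH.
have [vH|vH] := boolP (v \in H); last by apply: maxF; rewrite // inE HK vH.
have [G Gfac HG] := facet_above (setD1_link Kdc vH HK).
have FG : F \subset G by rewrite (subset_trans _ HG) // subsetD1 FH vF.
have GF : G = F.
  apply: maxF FG; move/facetsP: Gfac => [+ _].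
  by rewrite !inE => /andP[GK /andP[vG _]]; rewrite GK vG.
by move: (shed G Gfac); rewrite GF Ffac.
Qed.

Lemma shedding_by_witness K v w : v != w ->
  (forall G, G \in link K v -> w \notin G /\ w |: G \in K) -> sheds K v.
Proof.
move=> vw witness G /facetsP[GL _]; have [wG wGK] := witness G GL.
apply/negP => /facetsP[_ maxG].
have wGdel : w |: G \in deletion K v.
  by move: GL; rewrite !inE negb_or vw => /andP[_ /andP[-> _]]; rewrite wGK.
by move: wG; rewrite -(maxG _ wGdel (subsetUr _ _)) setU11.
Qed.

Lemma link_sub_deletion K v : link K v \subset deletion K v.
Proof. by apply/subsetP => F; rewrite !inE => /andP[-> /andP[-> _]]. Qed.

Lemma facets_powerset (S : {set T}) : perm_eq [:: S] (enum (facets (powerset S))).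
Proof.
apply: uniq_perm => //; first exact: enum_uniq.
move=> F; rewrite mem_enum inE; apply/eqP/facetsP => [->|[FS maxF]].
  split=> [|G]; first by rewrite inE subxx.
  by rewrite inE => GS SG; apply/eqP; rewrite eqEsubset GS SG.
by apply/esym/maxF; [rewrite inE | move: FS; rewrite inE].
Qed.

Definition shelling_step (P : seq {set T}) G :=
  forall F, F \in P -> exists2 F', F' \in P &
    exists v, [/\ v \in G, F :&: G \subset F' :&: G & F' :&: G = G :\ v].

(* The condition of [shellable], stated for each facet against the list of its predecessors. *)
Definition shelling_seq (s : seq {set T}) :=
  forall j, j < size s -> shelling_step (take j s) (nth set0 s j).

Lemma shelling_seq_shellable K s :
  perm_eq s (enum (facets K)) -> shelling_seq s -> shellable K.
Proof.
move=> sK shs; exists s; split=> // i j /andP[ij js].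
have sizej : size (take j s) = j by rewrite size_takel // ltnW.
have Fi : nth set0 s i \in take j s by rewrite -(nth_take _ ij) mem_nth // sizej.
have [F' F'j [v [vj FiF' F'E]]] := shs j js _ Fi.
have lj : index F' (take j s) < j by rewrite -index_mem sizej in F'j.
exists (index F' (take j s)), v.
by rewrite -(nth_take _ lj) nth_index.
Qed.

Lemma shelling_step_cone (Q P : seq {set T}) G v :
  (forall F, F \in Q -> v \notin F) -> v \notin G ->
  (exists2 F, F \in Q & G \subset F) ->
  shelling_step P G -> shelling_step (Q ++ [seq v |: F | F <- P]) (v |: G).
Proof.
move=> vQ vG [F0 F0Q GF0] stepG F; rewrite mem_cat => /orP[FQ|/mapP[F1 F1P ->]].
  exists F0; first by rewrite mem_cat F0Q.
  have F0E : F0 :&: (v |: G) = G.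
    apply/setP => x; rewrite !inE; case: eqVneq => [->|_]; last first.
      by apply: andb_idl; apply: (subsetP GF0).
    by rewrite (negbTE (vQ _ F0Q)) (negbTE vG).
  exists v; rewrite setU11 F0E setU1K //; split=> //.
  apply/subsetP => x; rewrite !inE => /andP[xF /orP[/eqP xv|//]].
  by move: xF; rewrite xv (negbTE (vQ _ FQ)).
have [F2 F2P [w [wG F1F2 F2E]]] := stepG F1 F1P.
exists (v |: F2); first by rewrite mem_cat map_f ?orbT.
exists w; rewrite -!setUIr setUS // F2E setU1r //; split=> //.
apply/setP => x; rewrite !inE; case: (eqVneq x v) => [->|//].
by rewrite /= andbT; apply/esym; apply: contraNneq vG => ->.
Qed.

Lemma shelling_seq_cone s1 s2 v :
  shelling_seq s1 -> shelling_seq s2 ->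
  (forall F, F \in s1 -> v \notin F) -> (forall G, G \in s2 -> v \notin G) ->
  (forall G, G \in s2 -> exists2 F, F \in s1 & G \subset F) ->
  shelling_seq (s1 ++ [seq v |: G | G <- s2]).
Proof.
move=> sh1 sh2 v1 v2 cover j; rewrite size_cat size_map take_cat nth_cat.
move=> js; case: ltnP => [js1|s1j]; first exact: sh1.
have js2 : j - size s1 < size s2 by rewrite ltn_subLR.
rewrite -map_take (nth_map set0) //.
apply: shelling_step_cone; [exact: v1 | | | exact: sh2].
  by apply: v2; rewrite mem_nth.
by apply: cover; rewrite mem_nth.
Qed.

Lemma perm_facets_shedding K v s1 s2 : down_closed K -> sheds K v ->
  perm_eq s1 (enum (facets (deletion K v))) ->
  perm_eq s2 (enum (facets (link K v))) ->
  perm_eq (s1 ++ [seq v |: G | G <- s2]) (enum (facets K)).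
Proof.
move=> Kdc shed p1 p2.
have m1 F : (F \in s1) = (F \in facets (deletion K v)) by rewrite (perm_mem p1) mem_enum.
have m2 G : (G \in s2) = (G \in facets (link K v)) by rewrite (perm_mem p2) mem_enum.
have v2 G : G \in s2 -> v \notin G.
  by rewrite m2 => /facetsP[]; rewrite !inE => /andP[_ /andP[]].
apply: uniq_perm; last 2 first.
- exact: enum_uniq.
- move=> F; rewrite mem_cat mem_enum m1; apply/orP/idP.
    case=> [|/mapP[G G2 ->]]; first exact: facet_deletion_shedding.
    by apply: facet_link_cone; rewrite -?m2.
  move=> /(facet_deletion_or_link v Kdc) [|[vF Fl]]; first by left.
  by right; apply/mapP; exists (F :\ v); rewrite ?m2 ?setD1K.
rewrite cat_uniq (perm_uniq p1) enum_uniq /=; apply/andP; split.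
  apply/hasPn => _ /mapP[G _ ->]; rewrite m1; apply/negP => /facetsP[].
  by rewrite inE setU11 andbF.
rewrite map_inj_in_uniq ?(perm_uniq p2) ?enum_uniq // => G1 G2 G1s G2s E.
by rewrite -(setU1K (v2 _ G1s)) E setU1K ?v2.
Qed.

Lemma vertex_decomposable_shelling K : vertex_decomposable K -> down_closed K ->
  exists2 s, perm_eq s (enum (facets K)) & shelling_seq s.
Proof.
elim=> {K} [K [S ->] _ | K v _ _ IHdel _ IHlink shed Kdc].
  by exists [:: S]; [exact: facets_powerset | case].
have [s1 p1 sh1] := IHdel (deletion_down_closed Kdc).
have [s2 p2 sh2] := IHlink (link_down_closed Kdc).
exists (s1 ++ [seq v |: G | G <- s2]); first exact: perm_facets_shedding.
apply: shelling_seq_cone => // [F|G|G]; rewrite ?(perm_mem p1) ?(perm_mem p2) mem_enum.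
- by case/facetsP; rewrite inE => /andP[].
- by case/facetsP => /(subsetP (link_sub_deletion K v)); rewrite inE => /andP[].
case/facetsP => /(subsetP (link_sub_deletion K v)) /facet_above [F Ffac GF].
by exists F; rewrite ?(perm_mem p1) ?mem_enum.
Qed.

Lemma vertex_decomposable_shellable K :
  vertex_decomposable K -> down_closed K -> shellable K.
Proof.
move=> vdK Kdc; have [s sK shs] := vertex_decomposable_shelling vdK Kdc.
exact: shelling_seq_shellable shs.
Qed.

End Complexes.

Definition has_simple_cycle (T : finType) (H : rel T) : Prop :=
  exists c : seq T, [&& 3 <= size c, uniq c & cycle H c].

Section LeaflessGraphs.
Variables (T : finType) (H : rel T).
Hypotheses (Hsym : symmetric H) (Hirr : irreflexive H).
Hypothesis leafless : forall u v, H u v -> exists2 w, w != u & H v w.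

Lemma path_grow_or_cycle a b r : uniq [:: a, b & r] -> path H a (b :: r) ->
  has_simple_cycle H \/ exists w, uniq [:: w, a, b & r] /\ path H w [:: a, b & r].
Proof.
move=> abr_uniq abr_path.
have Hba : H b a by move: abr_path => /= /andP[]; rewrite Hsym.
have [w wb Haw] := leafless Hba.
have [w_in|w_out] := boolP (w \in b :: r); last first.
  right; exists w; split; last by rewrite /= Hsym Haw.
  rewrite cons_uniq abr_uniq andbT inE negb_or w_out andbT.
  by apply: contraTneq Haw => ->; rewrite Hirr.
left; have [p1 [p2 Ebr]] : exists p1 p2, b :: r = p1 ++ w :: p2.
  by case/splitPr: w_in => p1 p2; exists p1, p2.
move: abr_uniq abr_path; rewrite Ebr.
case: p1 Ebr => [[bw _]|z p1 _ zw_uniq zw_path]; first by rewrite bw eqxx in wb.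
exists (a :: rcons (z :: p1) w); apply/and3P; split.
- by rewrite /= size_rcons.
- by move: zw_uniq; rewrite -cat_rcons -cat_cons cat_uniq => /andP[].
rewrite /cycle rcons_path last_rcons Hsym Haw andbT.
by move: zw_path; rewrite -cat_rcons cat_path => /andP[].
Qed.

Lemma leafless_cycle x y : H x y -> has_simple_cycle H.
Proof.
move=> Hxy.
suff /(_ #|T|) [//|[a [b [r [size_r abr_uniq _]]]]] : forall n, has_simple_cycle H \/
    exists a b r, [/\ size r = n, uniq [:: a, b & r] & path H a (b :: r)].
  have := max_card (mem [:: a, b & r]); rewrite (card_uniqP abr_uniq) /= size_r.
  by move/ltnW; rewrite ltnn.
elim=> [|n [|[a [b [r [size_r abr_uniq abr_path]]]]]]; [|by left|].
  right; exists x, y, [::]; split=> //=; rewrite ?Hxy // inE andbT.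
  by apply: contraTneq Hxy => ->; rewrite Hirr.
case: (path_grow_or_cycle abr_uniq abr_path) => [|[w [wabr_uniq wabr_path]]]; first by left.
by right; exists w, a, (b :: r); rewrite /= size_r.
Qed.

End LeaflessGraphs.

Section WeakForests.
Variable V : finType.
Implicit Types (A B F G : {set V * V}) (e f : V * V).

Definition weak_forest F :=
  [forall v, #|[set u | (u, v) \in F]| <= 1] &&
  [forall x, forall y, ~~ (((x, y) \in F) && ((y, x) \in F))].

Lemma weak_forestP F : reflect
  ((forall x y z, (x, z) \in F -> (y, z) \in F -> x = y) /\
   (forall x y, (x, y) \in F -> (y, x) \in F -> False)) (weak_forest F).
Proof.
apply: (iffP andP) => [[/forallP indeg /forallP anti]|[indeg anti]]; split.
- by move=> x y z xz yz; apply: (card_le1_eqP (indeg z)); rewrite inE.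
- by move=> x y xy yx; have /forallP/(_ y) := anti x; rewrite xy yx.
- by apply/forallP => z; apply/card_le1_eqP => x y; rewrite !inE => xz yz; apply: indeg yz xz.
by apply/forallP => x; apply/forallP => y; apply/negP => /andP[]; apply: anti.
Qed.

Lemma weak_forest0 : weak_forest set0.
Proof. by apply/weak_forestP; split=> [x y z|x y]; rewrite inE. Qed.

Lemma weak_forest_sub F G : G \subset F -> weak_forest F -> weak_forest G.
Proof.
move=> /subsetP GF /weak_forestP[indeg anti]; apply/weak_forestP; split.
  by move=> x y z /GF xz /GF; apply: indeg.
by move=> x y /GF xy /GF; apply: anti.
Qed.

Lemma weak_forest_add B f : f.1 != f.2 ->
  (forall x, (x, f.2) \notin B) -> (f.2, f.1) \notin B ->
  forall G, G \subset B -> weak_forest G -> weak_forest (f |: G).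
Proof.
case: f => a b /= ab no_in no_rev G /subsetP GB /weak_forestP[indeg anti].
have b_in x : (x, b) \notin G by apply: contra (no_in x); apply: GB.
have ba : (b, a) \notin G by apply: contra no_rev; apply: GB.
apply/weak_forestP; split=> [x y z|x y]; rewrite !inE !xpair_eqE.
  case/orP=> [/andP[/eqP-> /eqP->]|xz]; case/orP=> [/andP[/eqP-> /eqP zb]|yz] //.
  - by move: (b_in y); rewrite yz.
  - by move: (b_in x); rewrite -zb xz.
  - exact: indeg xz yz.
case/orP=> [/andP[/eqP-> /eqP->]|xy]; case/orP=> [/andP[/eqP ya /eqP xb]|yx].
- by move: ab; rewrite ya eqxx.
- by move: ba; rewrite yx.
- by move: ba; rewrite -ya -xb xy.
- exact: anti xy yx.
Qed.

Definition forest_complex A : {set {set V * V}} :=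
  [set F : {set V * V} | (F \subset A) && weak_forest F].

(* [e] and the edges that no weak forest containing [e] can contain. *)
Definition conflicts e : {set V * V} := [set x | (x.2 == e.2) || (x == (e.2, e.1))].

Lemma forest_complex_down_closed A : down_closed (forest_complex A).
Proof.
move=> F G; rewrite !inE => /andP[FA wF] GF.
by rewrite (subset_trans GF FA) (weak_forest_sub GF wF).
Qed.

Lemma forest_complex_powerset A : weak_forest A -> forest_complex A = powerset A.
Proof.
move=> wA; apply/setP => F; rewrite !inE andb_idr // => FA.
exact: weak_forest_sub FA wA.
Qed.

Lemma deletion_forest_complex A e :
  deletion (forest_complex A) e = forest_complex (A :\ e).
Proof. by apply/setP => F; rewrite !inE subsetD1 andbAC. Qed.

Lemma link_forest_complex A e : e.1 != e.2 -> e \in A ->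
  link (forest_complex A) e = forest_complex (A :\: conflicts e).
Proof.
case: e => u v /= uv eA; apply/setP => F; rewrite !inE; apply/andP/andP.
  case=> /andP[FA wF] /andP[eF /andP[_ /weak_forestP[indeg anti]]]; split=> //.
  apply/subsetP => -[a b] abF; rewrite !inE (subsetP FA) // andbT negb_or /=.
  have abeF : (a, b) \in (u, v) |: F by rewrite !inE abF orbT.
  have uveF : (u, v) \in (u, v) |: F by rewrite !inE eqxx.
  apply/andP; split; apply/eqP.
    by move=> bv; subst b; move: eF; rewrite -(indeg a u v abeF uveF) abF.
  by case=> av bu; subst a b; apply: (anti u v).
case=> FAC wF; have FA : F \subset A by apply: subset_trans FAC (subsetDl _ _).
have eF : (u, v) \notin F by apply/negP => /(subsetP FAC); rewrite !inE eqxx.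
split; first by rewrite FA.
rewrite eF subUset sub1set eA FA /=.
apply: (weak_forest_add (f := (u, v)) uv _ _ FAC wF) => [x|]; rewrite !inE ?eqxx //.
by rewrite orbT.
Qed.

Lemma weak_forest1 e : e.1 != e.2 -> weak_forest [set e].
Proof.
move=> e_loopfree; rewrite -[[set e]]setU0.
by apply: (weak_forest_add (B := set0)) weak_forest0 => // [x|]; rewrite inE.
Qed.

Lemma forest_complex_sheds A e f :
  e.1 != e.2 -> e \in A -> f \in A -> f \in conflicts e -> f != e ->
  (forall G, G \subset A :\: conflicts e -> weak_forest G -> weak_forest (f |: G)) ->
  sheds (forest_complex A) e.
Proof.
move=> e_loopfree eA fA fe f_ne free.
apply: (shedding_by_witness (w := f)); first by rewrite eq_sym.
move=> G; rewrite link_forest_complex // inE => /andP[GAC wG]; split.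
  by apply: contraL fe => /(subsetP GAC); rewrite inE => /andP[].
by rewrite inE subUset sub1set fA (subset_trans GAC (subsetDl _ _)) free.
Qed.

End WeakForests.

Section AcyclicUnderlyingGraph.
Variables (V : finType) (D : rel V).
Hypothesis Dirr : irreflexive D.
Hypothesis Dacyclic : ~ has_simple_cycle (underlying D).
Implicit Types (A F G : {set V * V}).

Lemma edge_loopfree A e : A \subset edge_set D -> e \in A -> e.1 != e.2.
Proof.
move=> /subsetP AD /AD; rewrite inE; case: e => a b /=.
by apply: contraTneq => ->; rewrite Dirr.
Qed.

Lemma underlying_subrel F :
  F \subset edge_set D -> subrel (fun a b => (a, b) \in F) (underlying D).
Proof.
move=> FD a b abF; have := edge_loopfree FD abF; rewrite /= /underlying => ->.
by move: (subsetP FD _ abF); rewrite inE => ->.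
Qed.

Lemma directed_forestE F : F \subset edge_set D -> directed_forest F = weak_forest F.
Proof.
move=> FD; congr andb; apply/idP/idP.
  move=> /negP no_cycle; apply/forallP => x; apply/forallP => y.
  apply/negP => /andP[xy yx]; apply: no_cycle.
  have xny : x != y := edge_loopfree FD xy.
  have two_lt : 2 < #|V|.+1.
    by rewrite ltnS; have := max_card [set x; y]; rewrite cards2 xny.
  apply/existsP; exists (Ordinal two_lt); apply/existsP; exists [tuple x; y].
  by rewrite /= inE xny xy yx.
move=> /forallP no2; apply/negP => /existsP[n /existsP[[s /eqP size_s] /and3P[n0]]] /=.
case: s size_s => [|a [|b [|c r]]] size_s s_uniq s_cycle.
- by rewrite -size_s in n0.
- by move: s_cycle => /= /andP[/(edge_loopfree FD)]; rewrite eqxx.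
- by move: s_cycle => /= /and3P[ab ba _]; move: (no2 a) => /forallP/(_ b); rewrite ab ba.
apply: Dacyclic; exists [:: a, b, c & r].
by rewrite s_uniq (sub_cycle (underlying_subrel FD) s_cycle).
Qed.

Lemma weak_forest_of_no_shedding A : A \subset edge_set D ->
  (forall u w v, u != w -> (u, v) \in A -> (w, v) \in A -> (v, w) \in A) ->
  (forall u v, (u, v) \in A -> (v, u) \in A -> exists2 x, x != v & (x, u) \in A) ->
  weak_forest A.
Proof.
move=> AD fork_back pair_in.
pose H x y := ((x, y) \in A) && ((y, x) \in A).
have Hsym : symmetric H by move=> a b; rewrite /H andbC.
have Hirr : irreflexive H.
  by move=> a; apply/negbTE/negP => /andP[/(edge_loopfree AD)]; rewrite eqxx.
have leafless a b : H a b -> exists2 w, w != a & H b w.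
  case/andP=> ab ba; have [w wa wb] := pair_in b a ba ab.
  by exists w; rewrite // /H wb (fork_back a) // eq_sym.
have noH x y : ~~ H x y.
  apply/negP => /(leafless_cycle Hsym Hirr leafless) [c /and3P[c3 c_uniq c_cycle]].
  apply: Dacyclic; exists c; rewrite c3 c_uniq.
  by apply: sub_cycle c_cycle => a b /andP[ab _]; apply: underlying_subrel AD _ _ ab.
apply/weak_forestP; split=> [x y z xz yz|x y xy yx].
  by apply/eqP; apply: contraNT (noH y z) => xy; rewrite /H yz (fork_back x).
by move: (noH x y); rewrite /H xy yx.
Qed.

Lemma shedding_edge A : A \subset edge_set D -> ~~ weak_forest A ->
  exists e f, [/\ e \in A, f \in A, f \in conflicts e, f != e &
    forall G, G \subset A :\: conflicts e -> weak_forest G -> weak_forest (f |: G)].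
Proof.
move=> AD nwA.
have [[u [w [v [uw uv wv vw]]]]|no_fork] := classic
    (exists u w v, [/\ u != w, (u, v) \in A, (w, v) \in A & (v, w) \notin A]).
  exists (u, v), (w, v); split=> //; first by rewrite inE eqxx.
    by rewrite xpair_eqE negb_and eq_sym uw.
  apply: weak_forest_add (edge_loopfree AD wv) _ _ => [x|]; rewrite !inE ?eqxx //.
  by rewrite negb_and vw orbT.
have [[u [v [uv vu only_v]]]|no_pair] := classic
    (exists u v, [/\ (u, v) \in A, (v, u) \in A & forall x, (x, u) \in A -> x = v]).
  exists (u, v), (v, u); split; rewrite ?inE ?eqxx ?orbT //.
    by rewrite xpair_eqE negb_and (edge_loopfree AD vu).
  apply: weak_forest_add (edge_loopfree AD vu) _ _ => [x|]; rewrite !inE ?eqxx //=.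
  by case xu: ((x, u) \in A); rewrite ?andbF // (only_v x xu) eqxx orbT.
case/negP: nwA; apply: weak_forest_of_no_shedding => // [u w v uw uv wv|u v uv vu].
  by apply/negPn/negP => vw; apply: no_fork; exists u, w, v.
apply: NNPP => no_x; apply: no_pair; exists u, v; split=> // x xu.
by apply: NNPP => xv; apply: no_x; exists x => //; apply/eqP.
Qed.

Lemma forest_complex_vertex_decomposable A :
  A \subset edge_set D -> vertex_decomposable (forest_complex A).
Proof.
have [n] := ubnP #|A|; elim: n A => // n IH A An AD.
have [wA|nwA] := boolP (weak_forest A).
  by apply: vd_simplex; exists A; apply: forest_complex_powerset.
have [e [f [eA fA fe f_ne free]]] := shedding_edge AD nwA.
have e_loopfree := edge_loopfree AD eA.
have AeD : A :\ e \subset edge_set D by apply: subset_trans (subD1set _ _) AD.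
have Ae_lt : #|A :\ e| < n by rewrite (cardsD1 e A) eA add1n ltnS in An.
have link_sub : A :\: conflicts e \subset A :\ e by rewrite setDS // sub1set inE eqxx.
apply: (vd_shed (v := e)).
- apply/existsP; exists [set e]; rewrite set11 andbT inE sub1set eA.
  exact: weak_forest1.
- by rewrite deletion_forest_complex; apply: IH.
- rewrite link_forest_complex //; apply: IH (subset_trans link_sub AeD).
  exact: leq_ltn_trans (subset_leq_card link_sub) Ae_lt.
exact: forest_complex_sheds free.
Qed.

End AcyclicUnderlyingGraph.

Theorem mainTheorem8 (V : finType) (D : rel V) :
  irreflexive D ->
  essentially_tree D ->
  vertex_decomposable (complex_of_directed_trees D) /\
  shellable (complex_of_directed_trees D).
Proof.
move=> Dirr [_ _ Dacyclic].
have -> : complex_of_directed_trees D = forest_complex (edge_set D).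
  apply/setP => F; rewrite !inE; apply: andb_id2l.
  exact: directed_forestE.
have vdD := forest_complex_vertex_decomposable Dirr Dacyclic (subxx _).
split=> //; apply: vertex_decomposable_shellable vdD _.
exact: forest_complex_down_closed.
Qed.
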